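(* Let $\mathsf V$ be a 1ESP variety and $h$ an algebraic e-generalization problem for $\mathsf V$. Then a homomorphism $g:\mathbf F_{\mathsf V}(z)\to\mathbf P$, with $\mathbf P$ finitely generated and projective in $\mathsf V$, is a solution of $h$ if and only if $\ker(g)\in\mathscr G(h)$.
   Context: $\mathbf F_{\mathsf V}(z)$ is the free algebra of the variety $\mathsf V$ on one generator $z$. An algebra is projective in $\mathsf V$ iff it is a retract of a free algebra of $\mathsf V$; exact in $\mathsf V$ if isomorphic to a finitely generated subalgebra of a finitely generated free algebra of $\mathsf V$. An algebra $\mathbf S$ is strongly projective in $\mathsf V$ if it is projective and, whenever $i:\mathbf S\to\mathbf P$ is an embedding into a projective algebra $\mathbf P$, there is a homomorphism $j:\mathbf P\to\mathbf S$ with $j\circ i=\mathrm{id}_{\mathbf S}$. $\mathsf V$ is 1ESP if every 1-generated exact algebra in $\mathsf V$ is strongly projective. An algebraic e-generalization problem is a homomorphism $h:\mathbf F_{\mathsf V}(z)\to\prod_{k=1}^m\mathbf E_k$ with each $\mathbf E_k$ 1-generated exact and each $p_k\circ h$ surjective. A solution of $h$ is a homomorphism $g:\mathbf F_{\mathsf V}(z)\to\mathbf P$, $\mathbf P$ finitely generated projective, with $f\circ g=h$ for some homomorphism $f:\mathbf P\to\prod_k\mathbf E_k$. $\mathscr G(h)=\{\ker(g): g\text{ a solution of } h\}$. *)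

From mathcomp Require Import all_boot.
Set Implicit Arguments. Unset Strict Implicit. Unset Printing Implicit Defensive.

Record signature := Signature { op : Type; arity : op -> nat }.
Arguments arity {s} o.

Record algebra (S : signature) := Algebra {
  carrier :> Type;
  interp : forall o : op S, ('I_(arity o) -> carrier) -> carrier }.
Arguments interp {S} a o _.

Section UA.
Variable S : signature.

Definition hom (A B : algebra S) (f : A -> B) : Prop :=
  forall (o : op S) (args : 'I_(arity o) -> A),
    f (interp A o args) = interp B o (fun i => f (args i)).

Definition embedding (A B : algebra S) (f : A -> B) : Prop :=
  hom f /\ injective f.

Inductive term (X : Type) : Type :=
| Var : X -> term X
| App : forall o : op S, ('I_(arity o) -> term X) -> term X.

Fixpoint eval (X : Type) (A : algebra S) (v : X -> A) (t : term X) : A :=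
  match t with
  | Var x => v x
  | App o ts => interp A o (fun i => eval v (ts i))
  end.

Record variety := Variety { identities : term nat * term nat -> Prop }.

Definition satisfies (A : algebra S) (e : term nat * term nat) : Prop :=
  forall v : nat -> A, eval v e.1 = eval v e.2.

Definition in_V (V : variety) (A : algebra S) : Prop :=
  forall e, identities V e -> satisfies A e.

Inductive generated (A : algebra S) (G : A -> Prop) : A -> Prop :=
| gen_base : forall a, G a -> generated G a
| gen_op : forall (o : op S) (args : 'I_(arity o) -> A),
    (forall i, generated G (args i)) -> generated G (interp A o args).

Definition fin_generated (A : algebra S) : Prop :=
  exists (n : nat) (gs : 'I_n -> A),
    forall a, generated (fun x => exists i, gs i = x) a.

Definition one_generated (A : algebra S) : Prop :=
  exists g : A, forall a, generated (fun x => x = g) a.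

Definition is_free (V : variety) (X : Type) (A : algebra S) (e : X -> A) : Prop :=
  in_V V A /\
  forall (B : algebra S), in_V V B -> forall f : X -> B,
    (exists h : A -> B, hom h /\ forall x, h (e x) = f x) /\
    (forall h1 h2 : A -> B, hom h1 -> hom h2 ->
       (forall x, h1 (e x) = f x) -> (forall x, h2 (e x) = f x) ->
       forall a, h1 a = h2 a).

Definition retract (A B : algebra S) : Prop :=
  exists (s : A -> B) (r : B -> A), hom s /\ hom r /\ forall a, r (s a) = a.

Definition projective (V : variety) (A : algebra S) : Prop :=
  in_V V A /\
  exists (X : Type) (F : algebra S) (e : X -> F), is_free V e /\ retract A F.

(* Exact in V: isomorphic to a finitely generated subalgebra of a finitely
   generated free algebra of V (free on a finite set 'I_n), i.e. A is
   finitely generated and embeds into such a free algebra. *)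
Definition exact (V : variety) (A : algebra S) : Prop :=
  in_V V A /\ fin_generated A /\
  exists (n : nat) (F : algebra S) (e : 'I_n -> F),
    is_free V e /\ exists i : A -> F, embedding i.

Definition strongly_projective (V : variety) (A : algebra S) : Prop :=
  projective V A /\
  forall (P : algebra S) (i : A -> P), projective V P -> embedding i ->
    exists j : P -> A, hom j /\ forall a, j (i a) = a.

Definition one_ESP (V : variety) : Prop :=
  forall A : algebra S, exact V A -> one_generated A -> strongly_projective V A.

Definition prod_alg (m : nat) (E : 'I_m -> algebra S) : algebra S :=
  @Algebra S (forall k : 'I_m, E k)
    (fun o args => fun k => interp (E k) o (fun i => args i k)).

Definition kernel (A B : algebra S) (f : A -> B) : A -> A -> Prop :=
  fun x y => f x = f y.

Definition e_gen_problem (V : variety) (F : algebra S) (m : nat)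
    (E : 'I_m -> algebra S) (h : F -> prod_alg E) : Prop :=
  hom h /\
  (forall k, exact V (E k) /\ one_generated (E k)) /\
  (forall k (y : E k), exists x : F, h x k = y).

Definition solution (V : variety) (F : algebra S) (m : nat)
    (E : 'I_m -> algebra S) (h : F -> prod_alg E)
    (P : algebra S) (g : F -> P) : Prop :=
  hom g /\ fin_generated P /\ projective V P /\
  exists f : P -> prod_alg E, hom f /\ forall x, f (g x) = h x.

(* G(h) = { ker g | g a solution of h }, as a predicate on relations of F. *)
Definition sol_kernels (V : variety) (F : algebra S) (m : nat)
    (E : 'I_m -> algebra S) (h : F -> prod_alg E) (theta : F -> F -> Prop) : Prop :=
  exists (P : algebra S) (g : F -> P), solution V h g /\ theta = kernel g.

End UA.

(** The kernel of a solution [g' : F -> P'] is contained in the kernel of [h], so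
    if [ker g = ker g'] then [h] factors through the image [A] of [g] as a map
    [f0 : A -> prod E].  The algebra [A] is generated by [g z], and it is exact:
    [P] is a retract of a free algebra, the section sends [A] into the subalgebra
    generated by finitely many free generators, and that subalgebra is free on them.
    By 1ESP, [A] is strongly projective, so the inclusion [A -> P] has a retraction
    [j], and [f0 \o j] witnesses that [g] is a solution. *)
From mathcomp Require Import all_boot.
From Stdlib Require Import ClassicalEpsilon ProofIrrelevance FunctionalExtensionality List.
Set Implicit Arguments. Unset Strict Implicit.

Definition range (Y A : Type) (f : Y -> A) : A -> Prop := fun a => exists y, f y = a.

Lemma sval_inj (T : Type) (Q : T -> Prop) : injective (@sval T Q).
Proof. exact: eq_sig_hprop (fun x => @proof_irrelevance (Q x)). Qed.

Section Subalgebras.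
Variable S : signature.

Lemma hom_comp (A B C : algebra S) (f : A -> B) (g : B -> C) :
  hom f -> hom g -> hom (fun a => g (f a)).
Proof. by move=> hf hg o args; rewrite hf hg. Qed.

Definition op_closed (B : algebra S) (Q : B -> Prop) :=
  forall o (args : 'I_(arity o) -> B), (forall i, Q (args i)) -> Q (interp B o args).

Definition subalg (B : algebra S) (Q : B -> Prop) (HQ : op_closed Q) : algebra S :=
  @Algebra S (sig Q) (fun o args => exist Q (interp B o (fun i => sval (args i)))
                                           (HQ o _ (fun i => proj2_sig (args i)))).

Variables (B : algebra S) (Q : B -> Prop) (HQ : op_closed Q).

Lemma embedding_sval : embedding (@sval B Q : subalg HQ -> B).
Proof. by split=> //; apply: sval_inj. Qed.

Lemma eval_subalg (v : nat -> subalg HQ) (t : term S nat) :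
  sval (eval v t) = eval (fun n => sval (v n)) t.
Proof.
elim: t => [x|o ts IH] //=.
by congr (interp B o); apply: functional_extensionality => i; apply: IH.
Qed.

Lemma in_V_subalg (V : variety S) : in_V V B -> in_V V (subalg HQ).
Proof. by move=> HB e He v; apply: sval_inj; rewrite !eval_subalg; apply: HB. Qed.

End Subalgebras.

Section Generated.
Variable S : signature.
Implicit Types A B : algebra S.

Lemma generated_closed A (G : A -> Prop) : op_closed (generated G).
Proof. by move=> o args; apply: gen_op. Qed.

Lemma generated_trans A (G G' : A -> Prop) a :
  (forall x, G x -> generated G' x) -> generated G a -> generated G' a.
Proof. by move=> GG'; elim=> [x /GG' //|o args _ IH]; apply: gen_op. Qed.

Lemma generated_hom A B (G : A -> Prop) (G' : B -> Prop) (f : A -> B) a :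
  hom f -> (forall x, G x -> generated G' (f x)) -> generated G a -> generated G' (f a).
Proof. by move=> hf GG'; elim=> [x /GG' //|o args _ IH]; rewrite hf; apply: gen_op. Qed.

Lemma hom_eq_generated A B (G : A -> Prop) (h1 h2 : A -> B) a :
  hom h1 -> hom h2 -> (forall x, G x -> h1 x = h2 x) -> generated G a -> h1 a = h2 a.
Proof.
move=> hh1 hh2 Gh; elim=> [x /Gh //|o args _ IH].
by rewrite hh1 hh2; congr (interp B o); apply: functional_extensionality.
Qed.

(* A nullary operation makes [B] inhabited even when [G] is empty. *)
Lemma generated_inhabited A B (G : A -> Prop) a :
  (forall x, G x -> inhabited B) -> generated G a -> inhabited B.
Proof.
move=> GB; elim=> [x /GB //|o args _ IH].
case: (classic (inhabited 'I_(arity o))) => [[i]|no_arg]; first exact: IH i.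
by constructor; apply: (interp B o) => i; case: no_arg.
Qed.

Definition gen_subalg A (G : A -> Prop) := subalg (@generated_closed A G).

Lemma gen_subalg_generated A (G : A -> Prop) (b : gen_subalg G) :
  generated (fun c : gen_subalg G => G (sval c)) b.
Proof.
case: b => a Ga; elim: a / Ga (Ga) => [x Gx|o args gen_args IH] Ga.
  exact: gen_base.
have -> : exist _ (interp A o args) Ga =
          interp (gen_subalg G) o (fun i => exist _ (args i) (gen_args i)).
  exact: sval_inj.
by apply: gen_op => i; apply: IH.
Qed.

End Generated.

Section FreeAlgebras.
Variables (S : signature) (V : variety S).

Lemma free_generated (X : Type) (A : algebra S) (e : X -> A) :
  is_free V e -> forall a, generated (range e) a.
Proof.
move=> [HA HF] a.
pose e' x : gen_subalg (range e) := exist _ (e x) (gen_base (ex_intro _ x erefl)).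
have [[h [hh he]] _] := HF _ (in_V_subalg HA) e'.
have [_ free_uniq] := HF A HA e.
have <- : sval (h a) = a.
  apply: (free_uniq (fun a => sval (h a)) id) => // [|x]; last by rewrite he.
  by apply: hom_comp.
exact: proj2_sig.
Qed.

Lemma hom_of_empty (A B : algebra S) : (A -> False) -> exists f : A -> B, hom f.
Proof. by move=> A0; exists (fun a => False_rect B (A0 a)) => o args; case: A0. Qed.

Lemma injective_extend (X Y B : Type) (gens : Y -> X) (f : Y -> B) :
  inhabited B -> injective gens -> exists f' : X -> B, forall y, f' (gens y) = f y.
Proof.
move=> [b0] gens_inj.
exists (fun x => match excluded_middle_informative (range gens x) with
                 | left Hx => f (sval (constructive_indefinite_description _ Hx))
                 | right _ => b0 end) => y.
case: excluded_middle_informative => [Hx|[]]; last by exists y.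
by case: constructive_indefinite_description => y' /= /gens_inj ->.
Qed.

Definition sub_gen (X Y : Type) (A : algebra S) (e : X -> A) (gens : Y -> X) (y : Y)
  : gen_subalg (range (fun y => e (gens y))) :=
  exist _ (e (gens y)) (gen_base (ex_intro _ y erefl)).

Lemma is_free_sub_gen (X Y : Type) (A : algebra S) (e : X -> A) (gens : Y -> X) :
  is_free V e -> injective gens -> is_free V (sub_gen e gens).
Proof.
move=> [HA HF] gens_inj; split; first exact: in_V_subalg.
move=> B HB f; split.
- case: (classic (inhabited B)) => [B_inh|B0].
    have [f' f'E] := injective_extend f B_inh gens_inj.
    have [[h [hh he]] _] := HF B HB f'.
    exists (fun a => h (sval a)); split; first exact: hom_comp.
    by move=> y /=; rewrite he f'E.
  have [h hh] : exists h : gen_subalg (range (fun y => e (gens y))) -> B, hom h.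
    apply: hom_of_empty => a; apply: B0.
    by apply: generated_inhabited (proj2_sig a) => _ [y _]; constructor; apply: f.
  by exists h; split=> // y; case: B0; constructor; apply: f.
- move=> h1 h2 hh1 hh2 E1 E2 a.
  apply: hom_eq_generated hh1 hh2 _ (gen_subalg_generated a) => b [y Hy].
  have -> : b = sub_gen e gens y by apply: sval_inj; rewrite -Hy.
  by rewrite E1 E2.
Qed.

End FreeAlgebras.

Section FiniteSupport.
Variables (S : signature) (X : Type) (A : algebra S) (e : X -> A).

Definition supported (l : list X) (a : A) :=
  generated (fun y => exists x, In x l /\ e x = y) a.

Lemma supported_incl l l' a : incl l l' -> supported l a -> supported l' a.
Proof.
move=> ll'; apply: generated_trans => _ [x [lx <-]].
by apply: gen_base; exists x; split=> //; apply: ll'.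
Qed.

Lemma supported_ord k (as_ : 'I_k -> A) :
  (forall i, exists l, supported l (as_ i)) -> exists l, forall i, supported l (as_ i).
Proof.
elim: k as_ => [|k IH] as_ fin_as; first by exists nil => -[].
have [l Hl] := IH (fun i => as_ (lift ord0 i)) (fun i => fin_as _).
have [l0 Hl0] := fin_as ord0.
exists (app l0 l) => i; case: (unliftP ord0 i) => [j ->|->].
  by apply: supported_incl (Hl j); apply: incl_appr; apply: incl_refl.
by apply: supported_incl Hl0; apply: incl_appl; apply: incl_refl.
Qed.

Lemma generated_supported a : generated (range e) a -> exists l, supported l a.
Proof.
elim=> [_ [x <-]|o args _ IH].
  by exists (x :: nil); apply: gen_base; exists x; split=> //; left.
have [l Hl] := supported_ord IH.
by exists l; apply: gen_op.
Qed.

End FiniteSupport.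

Lemma enum_list (X : Type) (l : list X) : exists n (gens : 'I_n -> X),
  injective gens /\ forall x, In x l -> exists i, gens i = x.
Proof.
elim: l => [|x l [n [gens [gens_inj l_gens]]]].
  have gens0 : 'I_0 -> X by case.
  by exists 0, gens0; split=> [[]|].
case: (classic (range gens x)) => [x_gens|x_new].
  by exists n, gens; split=> // y [<-|/l_gens].
exists n.+1, (fun i => if unlift ord0 i is Some j then gens j else x); split.
  move=> i j /=.
  case: (unliftP ord0 i) => [i' ->|->]; case: (unliftP ord0 j) => [j' ->|->] //.
  - by move/gens_inj ->.
  - by move=> E; case: x_new; exists i'.
  - by move=> E; case: x_new; exists j'.
move=> y [<-|/l_gens [i <-]]; first by exists ord0; rewrite unlift_none.
by exists (lift ord0 i); rewrite liftK.
Qed.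

Section Exactness.
Variables (S : signature) (V : variety S).

Lemma one_generated_fin (A : algebra S) : one_generated A -> fin_generated A.
Proof.
move=> [a0 gen_a0]; exists 1, (fun _ => a0) => a.
by apply: generated_trans (gen_a0 a) => _ ->; apply: gen_base; exists ord0.
Qed.

Lemma exact_of_embedding (A P : algebra S) (i : A -> P) :
  in_V V A -> fin_generated A -> projective V P -> embedding i -> exact V A.
Proof.
move=> HA HAfg [_ [X [FX [e [HFX [s [r [hs [_ rs]]]]]]]]] [hi i_inj].
have [k [gs gen_gs]] := HAfg.
have [l Hl] : exists l, forall j, supported e l (s (i (gs j))).
  by apply: supported_ord => j; apply: generated_supported; apply: free_generated HFX _.
have [n [gens [gens_inj l_gens]]] := enum_list l.
pose G := range (fun y => e (gens y)).
have siA a : generated G (s (i a)).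
  apply: (generated_hom (f := fun a => s (i a))) (gen_gs a); first exact: hom_comp.
  move=> _ [j <-]; apply: generated_trans (Hl j) => _ [x [lx <-]].
  by have [y <-] := l_gens x lx; apply: gen_base; exists y.
do 2!split=> //; exists n, (gen_subalg G), (sub_gen e gens).
split; first exact: is_free_sub_gen.
exists (fun a => exist _ (s (i a)) (siA a) : gen_subalg G); split.
  by move=> o args; apply: sval_inj; rewrite /= hi hs.
by move=> a b /(f_equal (fun c => r (sval c))) /=; rewrite !rs; apply: i_inj.
Qed.

End Exactness.

Section Image.
Variables (S : signature) (F P : algebra S) (g : F -> P) (Hg : hom g).

Lemma range_closed : op_closed (range g).
Proof.
move=> o args args_g.
pose xs i := sval (constructive_indefinite_description _ (args_g i)).
exists (interp F o xs); rewrite Hg; congr (interp P o).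
apply: functional_extensionality => i.
exact: proj2_sig (constructive_indefinite_description _ (args_g i)).
Qed.

Definition im_alg := subalg range_closed.

Definition im_corestr (x : F) : im_alg := exist _ (g x) (ex_intro _ x erefl).

Lemma hom_im_corestr : hom im_corestr.
Proof. by move=> o args; apply: sval_inj; rewrite /= Hg. Qed.

Lemma one_generated_im : one_generated F -> one_generated im_alg.
Proof.
move=> [z gen_z]; exists (im_corestr z) => a.
have [x ->] : exists x, a = im_corestr x.
  by case: a => p [x gx]; exists x; apply: sval_inj.
apply: (generated_hom hom_im_corestr) (gen_z x) => _ ->.
exact: gen_base.
Qed.

Lemma hom_factor_im (C : algebra S) (h : F -> C) :
  hom h -> (forall x y, g x = g y -> h x = h y) ->
  exists f : im_alg -> C, hom f /\ forall x, f (im_corestr x) = h x.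
Proof.
move=> hh ker_gh.
pose preim (a : im_alg) := sval (constructive_indefinite_description _ (proj2_sig a)).
have preimK a : g (preim a) = sval a.
  exact: proj2_sig (constructive_indefinite_description _ (proj2_sig a)).
exists (fun a => h (preim a)); split=> [o args|x]; last by apply: ker_gh; rewrite preimK.
rewrite -hh; apply: ker_gh; rewrite preimK Hg /=; congr (interp P o).
by apply: functional_extensionality => i; rewrite preimK.
Qed.

End Image.

Theorem theorem4p12 (S : signature) (V : variety S) (HV : one_ESP V)
  (F : algebra S) (z : F) (HF : is_free V (fun _ : unit => z))
  (m : nat) (E : 'I_m -> algebra S) (h : F -> prod_alg E)
  (Hh : e_gen_problem V h)
  (P : algebra S) (g : F -> P) (Hg : hom g)
  (HPfg : fin_generated P) (HPproj : projective V P) :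
  solution V h g <-> sol_kernels V h (kernel g).
Proof.
split=> [sol_g|[P' [g' [[_ [_ [_ [f' [_ f'g']]]]] ker_gg']]]]; first by exists P, g.
have ker_gh x y : g x = g y -> h x = h y.
  by move=> gxy; rewrite -!f'g'; have : kernel g x y := gxy; rewrite ker_gg' => ->.
have F1 : one_generated F.
  exists z => x; apply: generated_trans (free_generated HF x) => _ [_ <-].
  exact: gen_base.
have A1 := one_generated_im Hg F1.
have A_exact : exact V (im_alg Hg).
  apply: exact_of_embedding (in_V_subalg HPproj.1) (one_generated_fin A1) HPproj
                            (embedding_sval _).
have [_ A_sproj] := HV _ A_exact A1.
have [j [hj jK]] := A_sproj P sval HPproj (embedding_sval _).
have [f0 [hf0 f0g]] := hom_factor_im Hg Hh.1 ker_gh.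
do 3!split=> //; exists (fun p => f0 (j p)); split; first exact: hom_comp.
by move=> x; rewrite -f0g -(jK (im_corestr Hg x)).
Qed.
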